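(* Let $\Bbbk$ be a field of characteristic $0$, $\mathrm{Var}$ a variety of algebras defined by multilinear identities, and let $f=f(x_1,\dots,x_n)\in\mathrm{DiAlg0}\langle X\rangle$ be multilinear, written $f=f_1+\dots+f_n$ where $f_i$ consists of all terms of $f$ whose dimonomials have central letter $x_i$. Then $f\in T_0(\mathrm{DiVar})$ if and only if $f_i\in T_0(\mathrm{DiVar})$ for all $i=1,\dots,n$.
   Context: $\mathrm{Alg}\langle X\rangle$ is the free nonassociative algebra on a countable set $X=\{x_1,x_2,\dots\}$; $T_0(\mathrm{Var})$ is the set of multilinear elements of $\mathrm{Alg}\langle X\rangle$ vanishing identically on all algebras of $\mathrm{Var}$. A 0-dialgebra is a vector space with bilinear $\vdash,\dashv$ satisfying $(x\dashv y)\vdash z=(x\vdash y)\vdash z$, $x\dashv(y\vdash z)=x\dashv(y\dashv z)$; $\mathrm{DiAlg0}\langle X\rangle$ is the free 0-dialgebra. Central letter of a dimonomial: $c(a)=a$ for a generator, $c(w_1\vdash w_2)=c(w_2)$, $c(w_1\dashv w_2)=c(w_1)$. For multilinear $g\in\mathrm{Alg}\langle X\rangle$ containing $x_i$, $\Psi^{x_i}(g)$ replaces each product $uv$ by $u\dashv v$ if $x_i$ occurs in $u$ and by $u\vdash v$ otherwise. $\mathrm{DiVar}$ is the class of 0-dialgebras satisfying $\Psi^{x_i}(g)=0$ for all $g\in T_0(\mathrm{Var})$ and all variables $x_i$ of $g$; $T_0(\mathrm{DiVar})$ is the set of multilinear elements of $\mathrm{DiAlg0}\langle X\rangle$ vanishing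 on all of $\mathrm{DiVar}$. *)

From HB Require Import structures.
From mathcomp Require Import all_boot all_order all_algebra.
Set Implicit Arguments. Unset Strict Implicit. Unset Printing Implicit Defensive.
Import GRing.Theory.
Local Open Scope ring_scope.

Inductive mon : Type := MV of nat | MM of mon & mon.

Fixpoint mon_eqb (m1 m2 : mon) : bool :=
  match m1, m2 with
  | MV a, MV b => a == b
  | MM u v, MM u' v' => mon_eqb u u' && mon_eqb v v'
  | _, _ => false
  end.

Fixpoint leaves (m : mon) : seq nat :=
  match m with MV a => [:: a] | MM u v => leaves u ++ leaves v end.

(* An element of Alg<X> over k, written as a formal linear combination of
   monomials; its coefficient on a monomial is obtained by collecting terms. *)
Definition apoly (k : fieldType) := seq (k * mon).

Definition acoef (k : fieldType) (p : apoly k) (m : mon) : k :=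
  \sum_(t <- p | mon_eqb t.2 m) t.1.

Definition amultilinear (k : fieldType) (p : apoly k) : Prop :=
  exists s : seq nat, uniq s /\
    forall m, acoef p m != 0 -> perm_eq (leaves m) s.

Definition aoccurs (k : fieldType) (i : nat) (p : apoly k) : Prop :=
  exists m, acoef p m != 0 /\ i \in leaves m.

Record nalg (k : fieldType) := NAlg {
  na_car :> lmodType k;
  na_mul : na_car -> na_car -> na_car;
  na_mulDl : forall (a : k) (x y z : na_car),
      na_mul (a *: x + y) z = a *: na_mul x z + na_mul y z;
  na_mulDr : forall (a : k) (x y z : na_car),
      na_mul x (a *: y + z) = a *: na_mul x y + na_mul x z
}.

Fixpoint mon_eval (k : fieldType) (A : nalg k) (e : nat -> A) (m : mon) : A :=
  match m with
  | MV a => e a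
  | MM u v => na_mul (mon_eval e u) (mon_eval e v)
  end.

Definition apoly_eval (k : fieldType) (A : nalg k) (e : nat -> A) (p : apoly k) : A :=
  \sum_(t <- p) t.1 *: mon_eval e t.2.

(* A variety defined by multilinear identities is given by its set S of
   defining (multilinear) identities; A lies in Var iff all of S vanish on A. *)
Definition inVar (k : fieldType) (S : apoly k -> Prop) (A : nalg k) : Prop :=
  forall g, S g -> forall e : nat -> A, apoly_eval e g = 0.

Definition T0Var (k : fieldType) (S : apoly k -> Prop) (g : apoly k) : Prop :=
  amultilinear g /\
  forall A : nalg k, inVar S A -> forall e : nat -> A, apoly_eval e g = 0.

Inductive dmon : Type := DV of nat | DL of dmon & dmon | DR of dmon & dmon.

Fixpoint dmon_eqb (m1 m2 : dmon) : bool :=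
  match m1, m2 with
  | DV a, DV b => a == b
  | DL u v, DL u' v' => dmon_eqb u u' && dmon_eqb v v'
  | DR u v, DR u' v' => dmon_eqb u u' && dmon_eqb v v'
  | _, _ => false
  end.

Fixpoint dleaves (m : dmon) : seq nat :=
  match m with
  | DV a => [:: a]
  | DL u v => dleaves u ++ dleaves v
  | DR u v => dleaves u ++ dleaves v
  end.

Fixpoint central (m : dmon) : nat :=
  match m with
  | DV a => a
  | DL u _ => central u
  | DR _ v => central v
  end.

(* Elements of DiAlg0<X> are represented by formal linear combinations of
   dimonomials (representatives modulo the 0-dialgebra relations; the central
   letter and the multidegree are invariant under these relations). *)
Definition dpoly (k : fieldType) := seq (k * dmon).

Definition dcoef (k : fieldType) (p : dpoly k) (m : dmon) : k :=
  \sum_(t <- p | dmon_eqb t.2 m) t.1.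

Definition dmultilinear (k : fieldType) (p : dpoly k) : Prop :=
  exists s : seq nat, uniq s /\
    forall m, dcoef p m != 0 -> perm_eq (dleaves m) s.

Definition dmultilinear_in (k : fieldType) (n : nat) (p : dpoly k) : Prop :=
  forall m, dcoef p m != 0 -> perm_eq (dleaves m) (iota 1 n).

Definition central_part (k : fieldType) (i : nat) (p : dpoly k) : dpoly k :=
  [seq t <- p | central t.2 == i].

Record dialg0 (k : fieldType) := DiAlg0 {
  da_car :> lmodType k;
  da_l : da_car -> da_car -> da_car;
  da_r : da_car -> da_car -> da_car;
  da_lDl : forall (a : k) (x y z : da_car),
      da_l (a *: x + y) z = a *: da_l x z + da_l y z;
  da_lDr : forall (a : k) (x y z : da_car),
      da_l x (a *: y + z) = a *: da_l x y + da_l x z;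
  da_rDl : forall (a : k) (x y z : da_car),
      da_r (a *: x + y) z = a *: da_r x z + da_r y z;
  da_rDr : forall (a : k) (x y z : da_car),
      da_r x (a *: y + z) = a *: da_r x y + da_r x z;
  da_ax1 : forall x y z : da_car, da_r (da_l x y) z = da_r (da_r x y) z;
  da_ax2 : forall x y z : da_car, da_l x (da_r y z) = da_l x (da_l y z)
}.

Fixpoint dmon_eval (k : fieldType) (D : dialg0 k) (e : nat -> D) (m : dmon) : D :=
  match m with
  | DV a => e a
  | DL u v => da_l (dmon_eval e u) (dmon_eval e v)
  | DR u v => da_r (dmon_eval e u) (dmon_eval e v)
  end.

Definition dpoly_eval (k : fieldType) (D : dialg0 k) (e : nat -> D) (p : dpoly k) : D :=
  \sum_(t <- p) t.1 *: dmon_eval e t.2.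

Fixpoint psi_mon (i : nat) (m : mon) : dmon :=
  match m with
  | MV a => DV a
  | MM u v => if i \in leaves u then DL (psi_mon i u) (psi_mon i v)
              else DR (psi_mon i u) (psi_mon i v)
  end.

Definition psi (k : fieldType) (i : nat) (g : apoly k) : dpoly k :=
  [seq (t.1, psi_mon i t.2) | t <- g].

Definition inDiVar (k : fieldType) (S : apoly k -> Prop) (D : dialg0 k) : Prop :=
  forall g, T0Var S g -> forall i, aoccurs i g ->
    forall e : nat -> D, dpoly_eval e (psi i g) = 0.

Definition T0DiVar (k : fieldType) (S : apoly k -> Prop) (f : dpoly k) : Prop :=
  dmultilinear f /\
  forall D : dialg0 k, inDiVar S D -> forall e : nat -> D, dpoly_eval e f = 0.

From HB Require Import structures.
From mathcomp Require Import all_boot all_order all_algebra.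
Import GRing.Theory.
Local Open Scope ring_scope.
Set Implicit Arguments. Unset Strict Implicit. Unset Printing Implicit Defensive.

(* For a 0-dialgebra D, the double D x D with
     (x1, x2) -| (y1, y2) = (x1 -| y1, x2 -| y1),
     (x1, x2) |- (y1, y2) = (x1 |- y1, x1 |- y2)
   is again a 0-dialgebra, and the second coordinate of a dimonomial only
   depends linearly on the second coordinate of its central letter.  Hence
   substituting x_i := (a_i, a_i) and x_j := (a_j, 0) for j <> i, the second
   coordinate of f is f_i(a).  The double lies in DiVar whenever D does: for a
   multilinear g containing x_i, the second coordinate of Psi^{x_i}(g) is
   Psi^{x_i}(g) evaluated in D with x_i read in the second coordinates and all
   other letters in the first ones.  So f in T_0(DiVar) forces every f_i into
   it; the converse is f = f_1 + ... + f_n. *)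

Lemma mon_eqbP : Equality.axiom mon_eqb.
Proof.
elim=> [a|u IHu v IHv] [b|u' v'] /=; try by constructor.
- by apply: (iffP eqP) => [->|[]].
- by apply: (iffP andP) => [[/IHu -> /IHv ->]|[<- <-]]; split; [apply/IHu|apply/IHv].
Qed.
HB.instance Definition _ := hasDecEq.Build mon mon_eqbP.

Lemma dmon_eqbP : Equality.axiom dmon_eqb.
Proof.
elim=> [a|u IHu v IHv|u IHu v IHv] [b|u' v'|u' v'] /=; try by constructor.
- by apply: (iffP eqP) => [->|[]].
- by apply: (iffP andP) => [[/IHu -> /IHv ->]|[<- <-]]; split; [apply/IHu|apply/IHv].
- by apply: (iffP andP) => [[/IHu -> /IHv ->]|[<- <-]]; split; [apply/IHu|apply/IHv].
Qed.
HB.instance Definition _ := hasDecEq.Build dmon dmon_eqbP.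

Lemma dleaves_psi_mon i m : dleaves (psi_mon i m) = leaves m.
Proof. by elim: m => [a|u IHu v IHv] //=; case: ifP => _ /=; rewrite IHu IHv. Qed.

Lemma central_in_dleaves d : central d \in dleaves d.
Proof.
by elim: d => [a|u IHu v IHv|u IHu v IHv] /=; rewrite ?mem_seq1 ?mem_cat ?IHu ?IHv ?orbT.
Qed.

Section FormalCombinations.
Variables (k : fieldType) (T : eqType) (V : lmodType k).

Lemma sum_scale_collect (p : seq (k * T)) (F : T -> V) :
  \sum_(t <- p) t.1 *: F t.2 =
  \sum_(m <- undup (map snd p)) (\sum_(t <- p | t.2 == m) t.1) *: F m.
Proof.
symmetry; under eq_bigr do rewrite scaler_suml big_mkcond.
rewrite exchange_big /=; apply: eq_big_seq => t tp.
have tin : t.2 \in undup (map snd p) by rewrite mem_undup map_f.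
rewrite (bigD1_seq t.2) ?undup_uniq //= eqxx big1 ?addr0 // => m.
by rewrite eq_sym => /negbTE ->.
Qed.

Lemma eq_sum_scale_support (p : seq (k * T)) (F G : T -> V) :
  (forall m, \sum_(t <- p | t.2 == m) t.1 != 0 -> F m = G m) ->
  \sum_(t <- p) t.1 *: F t.2 = \sum_(t <- p) t.1 *: G t.2.
Proof.
move=> FG; rewrite !sum_scale_collect; apply: eq_bigr => m _.
by have [->|/FG->] := eqVneq (\sum_(t <- p | t.2 == m) t.1) 0; rewrite ?scale0r.
Qed.

End FormalCombinations.

Section Dialgebra.
Variables (k : fieldType) (D : dialg0 k).

Lemma da_l0x (z : D) : da_l 0 z = 0.
Proof.
have := da_lDl 1 0 0 z; rewrite !scale1r addr0 => h.
by apply: (@addrI _ (da_l 0 z)); rewrite addr0 -h.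
Qed.

Lemma da_rx0 (z : D) : da_r z 0 = 0.
Proof.
have := da_rDr 1 z 0 0; rewrite !scale1r addr0 => h.
by apply: (@addrI _ (da_r z 0)); rewrite addr0 -h.
Qed.

Lemma eq_dmon_eval (e1 e2 : nat -> D) d :
  {in dleaves d, e1 =1 e2} -> dmon_eval e1 d = dmon_eval e2 d.
Proof.
elim: d => [a|u IHu v IHv|u IHu v IHv] /= e12; first by rewrite e12 ?mem_seq1.
- by rewrite IHu ?IHv // => l hl; rewrite e12 // mem_cat hl ?orbT.
- by rewrite IHu ?IHv // => l hl; rewrite e12 // mem_cat hl ?orbT.
Qed.

Lemma dpoly_eval_central_part (e : nat -> D) i p :
  dpoly_eval e (central_part i p) =
  \sum_(t <- p) t.1 *: (if central t.2 == i then dmon_eval e t.2 else 0).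
Proof.
rewrite /dpoly_eval /central_part big_filter big_mkcond /=.
by apply: eq_bigr => t _; case: ifP => _; rewrite ?scaler0.
Qed.

Definition pair_l (x y : D * D) : D * D := (da_l x.1 y.1, da_l x.2 y.1).
Definition pair_r (x y : D * D) : D * D := (da_r x.1 y.1, da_r x.1 y.2).

Lemma pair_lDl a (x y z : D * D) : pair_l (a *: x + y) z = a *: pair_l x z + pair_l y z.
Proof. by rewrite /pair_l /= !da_lDl. Qed.
Lemma pair_lDr a (x y z : D * D) : pair_l x (a *: y + z) = a *: pair_l x y + pair_l x z.
Proof. by rewrite /pair_l /= !da_lDr. Qed.
Lemma pair_rDl a (x y z : D * D) : pair_r (a *: x + y) z = a *: pair_r x z + pair_r y z.
Proof. by rewrite /pair_r /= !da_rDl. Qed.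
Lemma pair_rDr a (x y z : D * D) : pair_r x (a *: y + z) = a *: pair_r x y + pair_r x z.
Proof. by rewrite /pair_r /= !da_rDr. Qed.
Lemma pair_ax1 (x y z : D * D) : pair_r (pair_l x y) z = pair_r (pair_r x y) z.
Proof. by rewrite /pair_r /pair_l /= !da_ax1. Qed.
Lemma pair_ax2 (x y z : D * D) : pair_l x (pair_r y z) = pair_l x (pair_l y z).
Proof. by rewrite /pair_r /pair_l /= !da_ax2. Qed.

Definition pair_dialg : dialg0 k :=
  @DiAlg0 k (D * D)%type pair_l pair_r
    pair_lDl pair_lDr pair_rDl pair_rDr pair_ax1 pair_ax2.

Lemma dmon_eval_pair_fst (E : nat -> pair_dialg) d :
  (dmon_eval E d).1 = dmon_eval (fun l => (E l).1) d.
Proof. by elim: d => [a|u IHu v IHv|u IHu v IHv] //=; rewrite IHu IHv. Qed.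

Lemma dpoly_eval_pair_fst (E : nat -> pair_dialg) p :
  (dpoly_eval E p).1 = dpoly_eval (fun l => (E l).1) p.
Proof.
rewrite /dpoly_eval; elim: p => [|t p IH]; rewrite ?big_nil ?big_cons //=.
by rewrite IH dmon_eval_pair_fst.
Qed.

Lemma dpoly_eval_pair_snd (E : nat -> pair_dialg) p :
  (dpoly_eval E p).2 = \sum_(t <- p) t.1 *: (dmon_eval E t.2).2.
Proof.
rewrite /dpoly_eval; elim: p => [|t p IH]; rewrite ?big_nil ?big_cons //=.
by rewrite IH.
Qed.

Definition mark (e : nat -> D) i : nat -> pair_dialg :=
  fun l => (e l, if l == i then e l else 0).

Lemma dmon_eval_mark_snd (e : nat -> D) i d :
  (dmon_eval (mark e i) d).2 = if central d == i then dmon_eval e d else 0.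
Proof.
elim: d => [a|u IHu v IHv|u IHu v IHv] //=.
- by rewrite /pair_l /= IHu dmon_eval_pair_fst; case: ifP; rewrite ?da_l0x.
- by rewrite /pair_r /= IHv dmon_eval_pair_fst; case: ifP; rewrite ?da_rx0.
Qed.

Definition mixed (E : nat -> pair_dialg) i : nat -> D :=
  fun l => if l == i then (E l).2 else (E l).1.

Lemma dmon_eval_psi_mon_snd (E : nat -> pair_dialg) i m :
  i \in leaves m -> uniq (leaves m) ->
  (dmon_eval E (psi_mon i m)).2 = dmon_eval (mixed E i) (psi_mon i m).
Proof.
elim: m => [a|u IHu v IHv] /=; first by rewrite mem_seq1 /mixed => /eqP -> _; rewrite eqxx.
rewrite mem_cat cat_uniq => iuv /and3P[uu uv_disj uv].
case: ifP => iu /=.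
- rewrite /pair_l /= IHu // dmon_eval_pair_fst; congr da_l; apply: eq_dmon_eval.
  rewrite dleaves_psi_mon => l lv; rewrite /mixed; case: eqP => // li; subst l.
  by move/hasPn: uv_disj => /(_ _ lv); rewrite /= iu.
- rewrite iu /= in iuv.
  rewrite /pair_r /= IHv // dmon_eval_pair_fst; congr da_r; apply: eq_dmon_eval.
  rewrite dleaves_psi_mon => l lu; rewrite /mixed; case: eqP => // li; subst l.
  by rewrite lu in iu.
Qed.

Lemma pair_dialg_inDiVar (S : apoly k -> Prop) : inDiVar S D -> inDiVar S pair_dialg.
Proof.
move=> DS g Tg i gi E.
have fst0 : (dpoly_eval E (psi i g)).1 = 0 by rewrite dpoly_eval_pair_fst; apply: DS.
suff snd0 : (dpoly_eval E (psi i g)).2 = 0.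
  by case: (dpoly_eval E (psi i g)) fst0 snd0 => a b /= -> ->.
rewrite dpoly_eval_pair_snd -[RHS](DS g Tg i gi (mixed E i)) /dpoly_eval /psi !big_map /=.
apply: (@eq_sum_scale_support _ _ _ _ (fun m => (dmon_eval E (psi_mon i m)).2)
                              (fun m => dmon_eval (mixed E i) (psi_mon i m))).
move=> m gm; case: Tg => -[s [s_uniq leaves_s]] _.
have [m0 [gm0 im0]] := gi.
have i_in_s : i \in s by rewrite -(perm_mem (leaves_s m0 gm0)).
apply: dmon_eval_psi_mon_snd; first by rewrite (perm_mem (leaves_s m gm)).
by rewrite (perm_uniq (leaves_s m gm)).
Qed.

End Dialgebra.

Section CentralParts.
Variables (k : fieldType) (n : nat) (f : dpoly k).
Hypothesis f_multilinear : dmultilinear_in n f.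

Lemma dcoef_central_part i m :
  dcoef (central_part i f) m = if central m == i then dcoef f m else 0.
Proof.
rewrite /dcoef /central_part big_filter_cond; case: ifP => mi.
- by apply: eq_bigl => t; case: (dmon_eqbP t.2 m) => [->|]; rewrite ?mi ?andbF.
- by rewrite big_pred0 // => t; case: (dmon_eqbP t.2 m) => [->|]; rewrite ?mi ?andbF.
Qed.

Lemma dmultilinear_in_central_part i : dmultilinear_in n (central_part i f).
Proof.
by move=> m; rewrite dcoef_central_part; case: ifP => _; [exact: f_multilinear | rewrite eqxx].
Qed.

Lemma dmultilinear_in_dmultilinear : dmultilinear f.
Proof. by exists (iota 1 n); split; [exact: iota_uniq | exact: f_multilinear]. Qed.

Lemma dpoly_eval_sum_central_parts (D : dialg0 k) (e : nat -> D) :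
  dpoly_eval e f = \sum_(i <- iota 1 n) dpoly_eval e (central_part i f).
Proof.
under [RHS]eq_bigr do rewrite dpoly_eval_central_part.
rewrite exchange_big /=; under [RHS]eq_bigr do rewrite -scaler_sumr.
apply: (@eq_sum_scale_support _ _ _ _ (dmon_eval e)
          (fun m => \sum_(i <- iota 1 n) if central m == i then dmon_eval e m else 0)).
move=> m fm; have mn : central m \in iota 1 n.
  by rewrite -(perm_mem (@f_multilinear m fm)) central_in_dleaves.
rewrite (bigD1_seq (central m)) ?iota_uniq //= eqxx big1 ?addr0 // => i.
by rewrite eq_sym => /negbTE ->.
Qed.

End CentralParts.

Theorem mainTheorem13 (k : fieldType) (hchar : [pchar k] =i pred0)
  (S : apoly k -> Prop) (hS : forall g, S g -> amultilinear g)
  (n : nat) (f : dpoly k) (hf : dmultilinear_in n f) :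
  T0DiVar S f <-> (forall i : nat, (1 <= i <= n)%N -> T0DiVar S (central_part i f)).
Proof.
split=> [[_ f0] i _ | fi0].
  split; first exact: dmultilinear_in_dmultilinear (@dmultilinear_in_central_part _ _ _ hf i).
  move=> D DS e; rewrite dpoly_eval_central_part.
  have := congr1 snd (f0 _ (pair_dialg_inDiVar DS) (mark e i)).
  rewrite dpoly_eval_pair_snd => snd0; apply: etrans snd0.
  by apply: eq_bigr => t _; rewrite dmon_eval_mark_snd.
split; first exact: dmultilinear_in_dmultilinear hf.
move=> D DS e; rewrite (dpoly_eval_sum_central_parts hf) big1_seq // => i /= ni.
by apply: (fi0 i _).2; move: ni; rewrite mem_iota addnC addn1 ltnS.
Qed.
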